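(* Let $\{A,B,C,D\}$ be a Descartes configuration in $\mathbb{R}^2$ in which every disk has integral symbol (all of $\dot x,\dot y$, curvature, co-curvature are integers) and the tangency spinor of each of the six pairs of disks is a Gaussian integer. Then: (a) if $D'$ is the Descartes conjugate of $D$ with respect to $A,B,C$, the Descartes configuration $\{A,B,C,D'\}$ again has integral symbols (indeed the symbols satisfy $\mathbf D+\mathbf D'=2(\mathbf A+\mathbf B+\mathbf C)$ entrywise) and Gaussian-integer tangency spinors for all six pairs; (b) the image of the configuration under inversion in the boundary circle of $A$ — whose disks have symbols $-\mathbf A$, $\mathbf B+2\mathbf A$, $\mathbf C+2\mathbf A$, $\mathbf D+2\mathbf A$ — again has integral symbols and Gaussian-integer tangency spinors for all six pairs.
   Context: A (generalized) disk in $\mathbb{R}^2$ is one of: (i) a closed round disk of radius $r>0$ with center $(x,y)$, curvature $A=1/r$; (ii) the closure of the complement of an open round disk of radius $r>0$ with center $(x,y)$, curvature $A=-1/r$; (iii) a closed half-plane $\{p: p\cdot n\ge h\}$, $|n|=1$, curvature $0$. A disk and its curvature are denoted by the same letter. The symbol of a disk $A$ is the vector $\mathbf A=(\dot x_A,\dot y_A,A,A^c)$ where in cases (i),(ii) $\dot x_A=Ax$, $\dot y_A=Ay$, $A^c=(\dot x_A^2+\dot y_A^2-1)/A$, and in case (iii) $(\dot x_A,\dot y_A)=n$, $A^c=2h$. Two disks are tangent if their interiors are disjoint and their boundaries meet in exactly one point (or they are half-planes with disjoint interiors and parallel boundaries). For tangent disks $A,B$ the tangency spinor is defined up to sign by $\mathrm{spin}(A,B)^2=(A\dot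 x_B-B\dot x_A)+i(A\dot y_B-B\dot y_A)$. A Descartes configuration is a set of four pairwise tangent disks with pairwise disjoint interiors; given three of them, the other disk tangent to all three with interior disjoint from them is the Descartes conjugate of the fourth. *)

From Stdlib Require Import Reals ZArith.
Open Scope R_scope.

Definition point := (R * R)%type.

(* Generalized disks:
   RoundDisk x y r : closed round disk, center (x,y), radius r (r > 0)
   CoDisk x y r    : closure of the complement of the open round disk
                     of center (x,y), radius r (r > 0)
   HalfPlane nx ny h : closed half-plane {p | p . n >= h}, |n| = 1 *)
Inductive disk : Type :=
| RoundDisk (x y r : R)
| CoDisk (x y r : R)
| HalfPlane (nx ny h : R).

Definition valid_disk (d : disk) : Prop :=
  match d with
  | RoundDisk _ _ r | CoDisk _ _ r => 0 < r
  | HalfPlane nx ny _ => nx ^ 2 + ny ^ 2 = 1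
  end.

Definition dist2 (p : point) (x y : R) : R := (fst p - x) ^ 2 + (snd p - y) ^ 2.
Definition dotn (p : point) (nx ny : R) : R := fst p * nx + snd p * ny.

Definition mem (d : disk) (p : point) : Prop :=
  match d with
  | RoundDisk x y r => dist2 p x y <= r ^ 2
  | CoDisk x y r => r ^ 2 <= dist2 p x y
  | HalfPlane nx ny h => h <= dotn p nx ny
  end.

Definition interior (d : disk) (p : point) : Prop :=
  match d with
  | RoundDisk x y r => dist2 p x y < r ^ 2
  | CoDisk x y r => r ^ 2 < dist2 p x y
  | HalfPlane nx ny h => h < dotn p nx ny
  end.

Definition boundary (d : disk) (p : point) : Prop :=
  match d with
  | RoundDisk x y r | CoDisk x y r => dist2 p x y = r ^ 2
  | HalfPlane nx ny h => dotn p nx ny = h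
  end.

Definition is_half (d : disk) : Prop :=
  match d with HalfPlane _ _ _ => True | _ => False end.

Definition tangent (d e : disk) : Prop :=
  (forall p, ~ (interior d p /\ interior e p)) /\
  ((exists p, boundary d p /\ boundary e p /\
       forall q, boundary d q -> boundary e q -> q = p)
   \/ (is_half d /\ is_half e /\ ~ (exists p, boundary d p /\ boundary e p))).

Definition curv (d : disk) : R :=
  match d with
  | RoundDisk _ _ r => 1 / r
  | CoDisk _ _ r => - (1 / r)
  | HalfPlane _ _ _ => 0
  end.

Definition xdot (d : disk) : R :=
  match d with
  | RoundDisk x _ _ | CoDisk x _ _ => curv d * x
  | HalfPlane nx _ _ => nx
  end.

Definition ydot (d : disk) : R :=
  match d with
  | RoundDisk _ y _ | CoDisk _ y _ => curv d * y
  | HalfPlane _ ny _ => ny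
  end.

Definition cocurv (d : disk) : R :=
  match d with
  | RoundDisk _ _ _ | CoDisk _ _ _ => (xdot d ^ 2 + ydot d ^ 2 - 1) / curv d
  | HalfPlane _ _ h => 2 * h
  end.

Definition symbol (d : disk) : R * R * R * R := (xdot d, ydot d, curv d, cocurv d).

Definition is_int (t : R) : Prop := exists z : Z, t = IZR z.

Definition integral_symbol (d : disk) : Prop :=
  is_int (xdot d) /\ is_int (ydot d) /\ is_int (curv d) /\ is_int (cocurv d).

(* spin(d,e)^2 = (d xdot_e - e xdot_d) + i (d ydot_e - e ydot_d);
   the spinor is a Gaussian integer iff this complex number is the square
   (a + b i)^2 = (a^2 - b^2) + (2ab) i of some Gaussian integer a + b i. *)
Definition spin_sq_re (d e : disk) : R := curv d * xdot e - curv e * xdot d.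
Definition spin_sq_im (d e : disk) : R := curv d * ydot e - curv e * ydot d.

Definition gaussian_spinor (d e : disk) : Prop :=
  exists a b : Z,
    IZR a ^ 2 - IZR b ^ 2 = spin_sq_re d e /\
    2 * IZR a * IZR b = spin_sq_im d e.

(* Descartes configuration {A,B,C,D}: four (valid) pairwise tangent disks
   (interiors are then pairwise disjoint by definition of tangency). *)
Definition descartes (A B C D : disk) : Prop :=
  valid_disk A /\ valid_disk B /\ valid_disk C /\ valid_disk D /\
  tangent A B /\ tangent A C /\ tangent A D /\
  tangent B C /\ tangent B D /\ tangent C D.

Definition all_integral (A B C D : disk) : Prop :=
  integral_symbol A /\ integral_symbol B /\ integral_symbol C /\ integral_symbol D.

Definition all_gaussian (A B C D : disk) : Prop :=
  gaussian_spinor A B /\ gaussian_spinor A C /\ gaussian_spinor A D /\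
  gaussian_spinor B C /\ gaussian_spinor B D /\ gaussian_spinor C D.

Definition descartes_conjugate (A B C D D' : disk) : Prop :=
  valid_disk D' /\ tangent A D' /\ tangent B D' /\ tangent C D' /\ D' <> D.

(* Inversion in the boundary circle of A (reflection if A is a half-plane).
   inv_dom A p : p is in the domain of the inversion (p is not the center). *)
Definition inv_dom (A : disk) (p : point) : Prop :=
  match A with
  | RoundDisk x y _ | CoDisk x y _ => p <> (x, y)
  | HalfPlane _ _ _ => True
  end.

Definition inv_map (A : disk) (p : point) : point :=
  match A with
  | RoundDisk x y r | CoDisk x y r =>
      (x + r ^ 2 * (fst p - x) / dist2 p x y,
       y + r ^ 2 * (snd p - y) / dist2 p x y)
  | HalfPlane nx ny h =>
      (fst p - 2 * (dotn p nx ny - h) * nx,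
       snd p - 2 * (dotn p nx ny - h) * ny)
  end.

(* Y is the image of the disk X under inversion in the boundary of A
   (as closed sets they agree away from the center of inversion). *)
Definition inv_image (A X Y : disk) : Prop :=
  forall p, inv_dom A p -> (mem Y p <-> mem X (inv_map A p)).

From Pilot Require Import Defs.
From Stdlib Require Import Reals ZArith Lra Psatz Classical.
From Coquelicot Require Import Complex.
Open Scope R_scope.

(* A generalized disk is encoded by its symbol, a vector of R^4 carrying the
   Lorentz form  Q(u,v) = x x' + y y' - (a b' + b a')/2.  The disk is the
   sublevel set {level <= 0} of the quadratic function
   level_u(p) = a |p|^2 - 2 (x,y).p + b, up to a positive factor.  From this:
   - valid disks have Q(d,d) = 1 and tangent disks have Q(d,e) = -1, so the
     symbols of a Descartes configuration form a "frame" with Gram matrix 2I - J;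
   - a frame is a basis (its coordinate determinant squares to 64), which gives
     explicit coordinates of any vector and hence the two solutions
     D and 2(A+B+C) - D of the conjugate problem;
   - spinor squares s(u,v) = a_u z_v - a_v z_u (z = x + iy) satisfy the complex
     Descartes relation  2(X^2+Y^2+Z^2) = (X+Y+Z)^2  for the three squares issued
     from one disk of a frame, and also for the three squares of any triple of
     mutually tangent disks; the second root of this relation in Z is then again
     the square of a Gaussian integer;
   - inversion in the boundary of A acts on symbols as the Lorentz reflection
     u - 2 Q(u,A) A, because a unit symbol is determined by its sublevel set. *)

Record vec : Type := Vec { vx : R; vy : R; va : R; vb : R }.

Definition form (u v : vec) : R :=
  vx u * vx v + vy u * vy v - (va u * vb v + vb u * va v) / 2.

Lemma form_sym u v : form u v = form v u.
Proof. unfold form; field. Qed.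

Definition sym (d : disk) : vec := Vec (xdot d) (ydot d) (curv d) (cocurv d).

Definition comb4 (c1 c2 c3 c4 : R) (v1 v2 v3 v4 : vec) : vec :=
  Vec (c1 * vx v1 + c2 * vx v2 + c3 * vx v3 + c4 * vx v4)
      (c1 * vy v1 + c2 * vy v2 + c3 * vy v3 + c4 * vy v4)
      (c1 * va v1 + c2 * va v2 + c3 * va v3 + c4 * va v4)
      (c1 * vb v1 + c2 * vb v2 + c3 * vb v3 + c4 * vb v4).

Lemma form_comb4 c1 c2 c3 c4 v1 v2 v3 v4 w :
  form (comb4 c1 c2 c3 c4 v1 v2 v3 v4) w
  = c1 * form v1 w + c2 * form v2 w + c3 * form v3 w + c4 * form v4 w.
Proof. unfold comb4, form; simpl; field. Qed.

Definition level (u : vec) (p : point) : R :=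
  va u * (fst p ^ 2 + snd p ^ 2) - 2 * (vx u * fst p + vy u * snd p) + vb u.

(* Half-gradient of [level u] at [p]; its norm is 1 on the boundary of a unit symbol. *)
Definition gradx (u : vec) (p : point) : R := va u * fst p - vx u.

Definition grady (u : vec) (p : point) : R := va u * snd p - vy u.

Lemma grad_dot u v p :
  gradx u p * gradx v p + grady u p * grady v p
  = (va v * level u p + va u * level v p) / 2 + form u v.
Proof. unfold gradx, grady, level, form; field. Qed.

Lemma level_shift u p e wx wy :
  level u (fst p + e * wx, snd p + e * wy)
  = level u p + 2 * e * (gradx u p * wx + grady u p * wy) + va u * e ^ 2 * (wx ^ 2 + wy ^ 2).
Proof. unfold level, gradx, grady; simpl; ring. Qed.

Definition gap (d : disk) (p : point) : R :=
  match d with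
  | RoundDisk x y r => dist2 p x y - r ^ 2
  | CoDisk x y r => r ^ 2 - dist2 p x y
  | HalfPlane nx ny h => h - dotn p nx ny
  end.

Lemma level_gap d : valid_disk d ->
  exists k, 0 < k /\ forall p, level (sym d) p = k * gap d p.
Proof.
  destruct d as [x y r|x y r|nx ny h]; simpl; intro V.
  - exists (1 / r); split; [apply Rdiv_lt_0_compat; lra|].
    intro p; unfold level, dist2; simpl; field; lra.
  - exists (1 / r); split; [apply Rdiv_lt_0_compat; lra|].
    intro p; unfold level, dist2; simpl; field; lra.
  - exists 2; split; [lra|]. intro p; unfold level, dotn; simpl; ring.
Qed.

Lemma level_sign d p : valid_disk d ->
  (Defs.mem d p <-> level (sym d) p <= 0) /\
  (Defs.interior d p <-> level (sym d) p < 0) /\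
  (Defs.boundary d p <-> level (sym d) p = 0).
Proof.
  intro V; destruct (level_gap d V) as [k [Hk E]]; rewrite E.
  assert (G : (Defs.mem d p <-> gap d p <= 0) /\ (Defs.interior d p <-> gap d p < 0) /\
              (Defs.boundary d p <-> gap d p = 0))
    by (destruct d; simpl; repeat split; lra).
  destruct G as [G1 [G2 G3]]; rewrite G1, G2, G3.
  repeat split; intro H; nra.
Qed.

Lemma valid_unit d : valid_disk d -> form (sym d) (sym d) = 1.
Proof.
  destruct d as [x y r|x y r|nx ny h]; simpl; intro V; unfold form; simpl.
  - field; lra.
  - field; lra.
  - nra.
Qed.

Lemma sym_inj d e : valid_disk d -> valid_disk e -> sym d = sym e -> d = e.
Proof.
  intros Vd Ve E; injection E; clear E; intros Eb Ea Ey Ex.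
  destruct d as [x y r|x y r|nx ny h], e as [x' y' r'|x' y' r'|mx my k]; simpl in *;
    try (assert (0 < 1 / r) by (apply Rdiv_lt_0_compat; lra));
    try (assert (0 < 1 / r') by (apply Rdiv_lt_0_compat; lra)); try lra.
  - assert (Hr : r = r') by (apply (Rmult_eq_reg_l (1 / r * (1 / r'))); [field_simplify; lra | nra]).
    subst r'; apply Rmult_eq_reg_l in Ex, Ey; try lra; subst; reflexivity.
  - assert (Hr : r = r') by (apply (Rmult_eq_reg_l (1 / r * (1 / r'))); [field_simplify; lra | nra]).
    subst r'; apply Rmult_eq_reg_l in Ex, Ey; try lra; subst; reflexivity.
  - subst; f_equal; lra.
Qed.

(* Two unit symbols whose boundaries meet at [p] and whose interiors are disjoint
   have Q = -1: otherwise moving from [p] against both gradients enters both interiors. *)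
Lemma tangent_point_form u v p :
  form u u = 1 -> form v v = 1 -> level u p = 0 -> level v p = 0 ->
  (forall q, ~ (level u q < 0 /\ level v q < 0)) -> form u v = -1.
Proof.
  intros Nu Nv Fu Fv Disj.
  pose proof (grad_dot u u p) as Guu; pose proof (grad_dot v v p) as Gvv;
  pose proof (grad_dot u v p) as Guv; rewrite Fu, Fv in *.
  set (Q := form u v) in *.
  set (wx := - (gradx u p + gradx v p)); set (wy := - (grady u p + grady v p)).
  assert (Wu : gradx u p * wx + grady u p * wy = - (1 + Q)) by (unfold wx, wy; nra).
  assert (Wv : gradx v p * wx + grady v p * wy = - (1 + Q)) by (unfold wx, wy; nra).
  assert (Ww : wx ^ 2 + wy ^ 2 = 2 * (1 + Q)) by (unfold wx, wy; nra).
  assert (Hge : 0 <= 1 + Q) by (pose proof (pow2_ge_0 wx); pose proof (pow2_ge_0 wy); lra).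
  destruct (Req_dec (1 + Q) 0) as [H0|H0]; [lra|exfalso].
  set (e := 1 / (Rabs (va u) + Rabs (va v) + 1)).
  assert (Habs : 0 <= Rabs (va u) /\ 0 <= Rabs (va v) /\ va u <= Rabs (va u) /\ va v <= Rabs (va v))
    by (repeat split; (apply Rabs_pos || apply Rle_abs)).
  assert (He : 0 < e) by (unfold e; apply Rdiv_lt_0_compat; lra).
  assert (Hue : va u * e < 1 /\ va v * e < 1).
  { unfold e; split; apply (Rmult_lt_reg_r (Rabs (va u) + Rabs (va v) + 1)); try lra;
      field_simplify; lra. }
  apply (Disj (fst p + e * wx, snd p + e * wy)).
  rewrite !level_shift, Fu, Fv, Wu, Wv, Ww.
  assert (Hp : 0 < e * (1 + Q)) by (apply Rmult_lt_0_compat; lra).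
  split; [replace (0 + 2 * e * - (1 + Q) + va u * e ^ 2 * (2 * (1 + Q)))
            with (2 * (e * (1 + Q)) * (va u * e - 1)) by ring
         |replace (0 + 2 * e * - (1 + Q) + va v * e ^ 2 * (2 * (1 + Q)))
            with (2 * (e * (1 + Q)) * (va v * e - 1)) by ring]; nra.
Qed.

Lemma halfplanes_form nx ny h mx my k :
  nx ^ 2 + ny ^ 2 = 1 -> mx ^ 2 + my ^ 2 = 1 ->
  (forall q, ~ (h < dotn q nx ny /\ k < dotn q mx my)) -> nx * mx + ny * my = -1.
Proof.
  intros Nn Nm Disj; set (c := nx * mx + ny * my).
  assert (Hge : -1 <= c) by (pose proof (pow2_ge_0 (nx + mx)); pose proof (pow2_ge_0 (ny + my));
                              unfold c; nra).
  destruct (Req_dec c (-1)) as [E|E]; [exact E|exfalso].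
  set (l := (Rabs h + Rabs k + 1) / (1 + c)).
  assert (Hl : l * (1 + c) = Rabs h + Rabs k + 1) by (unfold l; field; lra).
  apply (Disj (l * (nx + mx), l * (ny + my))); unfold dotn; simpl.
  pose proof (Rle_abs h); pose proof (Rle_abs k); pose proof (Rabs_pos h); pose proof (Rabs_pos k).
  replace (l * (nx + mx) * nx + l * (ny + my) * ny) with (l * ((nx ^ 2 + ny ^ 2) + c))
    by (unfold c; ring).
  replace (l * (nx + mx) * mx + l * (ny + my) * my) with (l * ((mx ^ 2 + my ^ 2) + c))
    by (unfold c; ring).
  rewrite Nn, Nm, Hl; lra.
Qed.

Lemma tangent_form d e : valid_disk d -> valid_disk e -> tangent d e ->
  form (sym d) (sym e) = -1.
Proof.
  intros Vd Ve [Disj [[p [Bd [Be _]]] | [Hd [He _]]]].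
  - apply (tangent_point_form _ _ p (valid_unit d Vd) (valid_unit e Ve)).
    + apply (level_sign d p Vd); exact Bd.
    + apply (level_sign e p Ve); exact Be.
    + intros q [Iu Iv]; apply (Disj q); split;
        [apply (level_sign d q Vd) | apply (level_sign e q Ve)]; assumption.
  - destruct d as [| |nx ny h]; try contradiction; destruct e as [| |mx my k]; try contradiction.
    unfold form; simpl.
    rewrite (halfplanes_form nx ny h mx my k Vd Ve Disj); lra.
Qed.

Definition frame (v1 v2 v3 v4 : vec) : Prop :=
  form v1 v1 = 1 /\ form v2 v2 = 1 /\ form v3 v3 = 1 /\ form v4 v4 = 1 /\
  form v1 v2 = -1 /\ form v1 v3 = -1 /\ form v1 v4 = -1 /\
  form v2 v3 = -1 /\ form v2 v4 = -1 /\ form v3 v4 = -1.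

Lemma descartes_frame A B C D : descartes A B C D -> frame (sym A) (sym B) (sym C) (sym D).
Proof.
  intros (VA & VB & VC & VD & TAB & TAC & TAD & TBC & TBD & TCD).
  repeat split; (apply valid_unit || apply tangent_form); assumption.
Qed.

Definition det3 (a b c d e f g h i : R) : R :=
  a * (e * i - f * h) - b * (d * i - f * g) + c * (d * h - e * g).

Definition det4 (v1 v2 v3 v4 : vec) : R :=
    vx v1 * det3 (vy v2) (va v2) (vb v2) (vy v3) (va v3) (vb v3) (vy v4) (va v4) (vb v4)
  - vy v1 * det3 (vx v2) (va v2) (vb v2) (vx v3) (va v3) (vb v3) (vx v4) (va v4) (vb v4)
  + va v1 * det3 (vx v2) (vy v2) (vb v2) (vx v3) (vy v3) (vb v3) (vx v4) (vy v4) (vb v4)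
  - vb v1 * det3 (vx v2) (vy v2) (va v2) (vx v3) (vy v3) (va v3) (vx v4) (vy v4) (va v4).

Definition gram_row (u v1 v2 v3 v4 : vec) : vec :=
  Vec (form u v1) (form u v2) (form u v3) (form u v4).

(* det(Gram) = -(1/4) det(V)^2, since Q has determinant -1/4. *)
Lemma gram_det v1 v2 v3 v4 :
  det4 (gram_row v1 v1 v2 v3 v4) (gram_row v2 v1 v2 v3 v4)
       (gram_row v3 v1 v2 v3 v4) (gram_row v4 v1 v2 v3 v4)
  = - (1 / 4) * det4 v1 v2 v3 v4 ^ 2.
Proof.
  destruct v1, v2, v3, v4; unfold det4, det3, gram_row, form; simpl; field.
Qed.

(* A frame is a basis: det(2I - J) = -16 forces det(V)^2 = 64. *)
Lemma frame_det v1 v2 v3 v4 : frame v1 v2 v3 v4 -> det4 v1 v2 v3 v4 <> 0.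
Proof.
  intros (G11 & G22 & G33 & G44 & G12 & G13 & G14 & G23 & G24 & G34) Hz.
  pose proof (gram_det v1 v2 v3 v4) as E.
  unfold gram_row in E.
  rewrite (form_sym v2 v1), (form_sym v3 v1), (form_sym v3 v2), (form_sym v4 v1),
    (form_sym v4 v2), (form_sym v4 v3), G11, G22, G33, G44, G12, G13, G14, G23, G24, G34, Hz in E.
  unfold det4, det3 in E; simpl in E; lra.
Qed.

Definition set_x (u : vec) (c : R) : vec := Vec c (vy u) (va u) (vb u).

Definition set_y (u : vec) (c : R) : vec := Vec (vx u) c (va u) (vb u).

Definition set_a (u : vec) (c : R) : vec := Vec (vx u) (vy u) c (vb u).

Definition set_b (u : vec) (c : R) : vec := Vec (vx u) (vy u) (va u) c.

(* Cramer's rule, for the coordinates (x, y, -b/2, -a/2) that pair with Q. *)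
Lemma cramer v1 v2 v3 v4 r :
  det4 v1 v2 v3 v4 * vx r
    = det4 (set_x v1 (form v1 r)) (set_x v2 (form v2 r)) (set_x v3 (form v3 r)) (set_x v4 (form v4 r)) /\
  det4 v1 v2 v3 v4 * vy r
    = det4 (set_y v1 (form v1 r)) (set_y v2 (form v2 r)) (set_y v3 (form v3 r)) (set_y v4 (form v4 r)) /\
  det4 v1 v2 v3 v4 * (- vb r / 2)
    = det4 (set_a v1 (form v1 r)) (set_a v2 (form v2 r)) (set_a v3 (form v3 r)) (set_a v4 (form v4 r)) /\
  det4 v1 v2 v3 v4 * (- va r / 2)
    = det4 (set_b v1 (form v1 r)) (set_b v2 (form v2 r)) (set_b v3 (form v3 r)) (set_b v4 (form v4 r)).
Proof.
  destruct v1, v2, v3, v4, r; unfold det4, det3, set_x, set_y, set_a, set_b, form; simpl;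
    repeat split; field.
Qed.

Lemma det4_zero_column v1 v2 v3 v4 :
  det4 (set_x v1 0) (set_x v2 0) (set_x v3 0) (set_x v4 0) = 0 /\
  det4 (set_y v1 0) (set_y v2 0) (set_y v3 0) (set_y v4 0) = 0 /\
  det4 (set_a v1 0) (set_a v2 0) (set_a v3 0) (set_a v4 0) = 0 /\
  det4 (set_b v1 0) (set_b v2 0) (set_b v3 0) (set_b v4 0) = 0.
Proof. unfold det4, det3, set_x, set_y, set_a, set_b; simpl; repeat split; ring. Qed.

Lemma form_kernel v1 v2 v3 v4 r : det4 v1 v2 v3 v4 <> 0 ->
  form v1 r = 0 -> form v2 r = 0 -> form v3 r = 0 -> form v4 r = 0 -> r = Vec 0 0 0 0.
Proof.
  intros Hd H1 H2 H3 H4.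
  destruct (cramer v1 v2 v3 v4 r) as (Cx & Cy & Ca & Cb).
  rewrite H1, H2, H3, H4 in Cx, Cy, Ca, Cb.
  destruct (det4_zero_column v1 v2 v3 v4) as (Zx & Zy & Za & Zb).
  rewrite Zx in Cx; rewrite Zy in Cy; rewrite Za in Ca; rewrite Zb in Cb.
  apply Rmult_integral in Cx, Cy, Ca, Cb.
  destruct r; simpl in *; f_equal; intuition lra.
Qed.

(* Coordinates in a frame: the dual basis of (v_i) is (v_i/2 - (sum v_j)/4). *)
Definition frame_expand (v1 v2 v3 v4 u : vec) : vec :=
  let s := form v1 u + form v2 u + form v3 u + form v4 u in
  comb4 (form v1 u / 2 - s / 4) (form v2 u / 2 - s / 4)
        (form v3 u / 2 - s / 4) (form v4 u / 2 - s / 4) v1 v2 v3 v4.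

Lemma frame_coords v1 v2 v3 v4 u : frame v1 v2 v3 v4 -> u = frame_expand v1 v2 v3 v4 u.
Proof.
  intro F; pose proof (frame_det _ _ _ _ F) as Hd.
  destruct F as (G11 & G22 & G33 & G44 & G12 & G13 & G14 & G23 & G24 & G34).
  set (e := frame_expand v1 v2 v3 v4 u).
  set (r := Vec (vx u - vx e) (vy u - vy e) (va u - va e) (vb u - vb e)).
  assert (Er : forall w, form w r = form w u - form e w)
    by (intro w; rewrite (form_sym e w); unfold r, form; simpl; field).
  assert (R0 : r = Vec 0 0 0 0).
  { apply (form_kernel v1 v2 v3 v4 r Hd); rewrite Er; unfold e, frame_expand; rewrite form_comb4;
      rewrite ?(form_sym v2 v1), ?(form_sym v3 v1), ?(form_sym v3 v2),
        ?(form_sym v4 v1), ?(form_sym v4 v2), ?(form_sym v4 v3),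
        ?G11, ?G22, ?G33, ?G44, ?G12, ?G13, ?G14, ?G23, ?G24, ?G34; field. }
  destruct u, e; unfold r in R0; simpl in R0; injection R0; intros; f_equal; lra.
Qed.

Lemma frame_form v1 v2 v3 v4 u w : frame v1 v2 v3 v4 ->
  let p1 := form v1 u in let p2 := form v2 u in let p3 := form v3 u in let p4 := form v4 u in
  let q1 := form v1 w in let q2 := form v2 w in let q3 := form v3 w in let q4 := form v4 w in
  2 * form u w = p1 * q1 + p2 * q2 + p3 * q3 + p4 * q4 - (p1 + p2 + p3 + p4) * (q1 + q2 + q3 + q4) / 2.
Proof.
  intros F p1 p2 p3 p4 q1 q2 q3 q4.
  rewrite (frame_coords v1 v2 v3 v4 u F) at 1.
  unfold frame_expand; rewrite form_comb4; fold p1 p2 p3 p4 q1 q2 q3 q4; field.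
Qed.

Lemma frame_conjugate v1 v2 v3 v4 u : frame v1 v2 v3 v4 ->
  form v1 u = -1 -> form v2 u = -1 -> form v3 u = -1 -> form u u = 1 ->
  u = v4 \/ u = comb4 2 2 2 (-1) v1 v2 v3 v4.
Proof.
  intros F H1 H2 H3 Hu.
  pose proof (frame_form v1 v2 v3 v4 u u F) as B; simpl in B.
  pose proof (frame_coords v1 v2 v3 v4 u F) as Eu; unfold frame_expand in Eu.
  rewrite H1, H2, H3, Hu in B; rewrite H1, H2, H3 in Eu.
  set (k := form v4 u) in B, Eu.
  assert (Hk : (k - 1) * (k + 7) = 0) by nra.
  destruct (Rmult_integral _ _ Hk) as [Hk1|Hk1]; [left|right];
    [assert (E : k = 1) by lra | assert (E : k = -7) by lra];
    rewrite Eu, E; unfold comb4; destruct v4; simpl; f_equal; field.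
Qed.

Lemma conjugate_symbol A B C D D' : descartes A B C D -> descartes_conjugate A B C D D' ->
  sym D' = comb4 2 2 2 (-1) (sym A) (sym B) (sym C) (sym D).
Proof.
  intros Desc (VD' & TAD' & TBD' & TCD' & Hne).
  pose proof Desc as (VA & VB & VC & VD & _).
  destruct (frame_conjugate _ _ _ _ (sym D') (descartes_frame _ _ _ _ Desc)) as [Same|Other];
    try (apply tangent_form || apply valid_unit); try assumption.
  exfalso; apply Hne, sym_inj; assumption.
Qed.

Definition spinsq (u v : vec) : C :=
  (va u * vx v - va v * vx u, va u * vy v - va v * vy u).

(* The complex Descartes quadratic form; it vanishes on Descartes quadruples. *)
Definition quad4 (w1 w2 w3 w4 : C) : C :=
  (RtoC 2 * (w1 * w1 + w2 * w2 + w3 * w3 + w4 * w4) - (w1 + w2 + w3 + w4) * (w1 + w2 + w3 + w4))%C.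

Lemma C_ext (z w : C) : fst z = fst w -> snd z = snd w -> z = w.
Proof. destruct z, w; simpl; intros -> ->; reflexivity. Qed.

Lemma spinsq_self u : spinsq u u = 0%C.
Proof. apply C_ext; unfold spinsq; simpl; ring. Qed.

Lemma spinsq_swap u v : spinsq v u = (- spinsq u v)%C.
Proof. apply C_ext; unfold spinsq, Copp; simpl; ring. Qed.

(* [quad4] is symmetric; these are the instances used to move a zero entry last. *)
Lemma quad4_move_zero X Y W :
  quad4 0 X Y W = quad4 X Y W 0 /\ quad4 X 0 Y W = quad4 X Y W 0 /\ quad4 X Y 0 W = quad4 X Y W 0.
Proof. unfold quad4; repeat split; ring. Qed.

Lemma quad4_other_root X Y W :
  quad4 X Y (RtoC 2 * X + RtoC 2 * Y - W)%C 0 = quad4 X Y W 0.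
Proof. unfold quad4; ring. Qed.

(* The spinor squares from any vector [s] to a frame satisfy the complex Descartes
   relation: real and imaginary parts are values of Q, so this is [frame_form]. *)
Lemma frame_spinor_relation v1 v2 v3 v4 s : frame v1 v2 v3 v4 ->
  quad4 (spinsq s v1) (spinsq s v2) (spinsq s v3) (spinsq s v4) = 0%C.
Proof.
  intro F.
  set (re := Vec (va s) 0 0 (2 * vx s)); set (im := Vec 0 (va s) 0 (2 * vy s)).
  assert (Es : forall v, spinsq s v = (form v re, form v im))
    by (intro v; apply C_ext; unfold spinsq, form, re, im; simpl; field).
  pose proof (frame_form v1 v2 v3 v4 re re F) as Brr.
  pose proof (frame_form v1 v2 v3 v4 im im F) as Bii.
  pose proof (frame_form v1 v2 v3 v4 re im F) as Bri.
  simpl in Brr, Bii, Bri.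
  assert (Nr : form re re = va s ^ 2) by (unfold form, re; simpl; field).
  assert (Ni : form im im = va s ^ 2) by (unfold form, im; simpl; field).
  assert (Nri : form re im = 0) by (unfold form, re, im; simpl; field).
  rewrite !Es; apply C_ext; unfold quad4, Cminus, Cplus, Cmult, Copp, RtoC; simpl; nra.
Qed.

(* The null vector of weight [m] attached to the point [p]. *)
Definition vpoint (m : R) (p : point) : vec :=
  Vec (m * fst p) (m * snd p) m (m * (fst p ^ 2 + snd p ^ 2)).

Lemma form_vpoint u m p : form u (vpoint m p) = - (m / 2) * level u p.
Proof. unfold form, vpoint, level; simpl; field. Qed.

Definition vdiff (u v : vec) : vec := Vec (vx u - vx v) (vy u - vy v) (va u - va v) (vb u - vb v).

Lemma form_vdiff x u v : form x (vdiff u v) = form x u - form x v.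
Proof. unfold form, vdiff; simpl; field. Qed.

(* For tangent unit vectors v and w the sum v + w is a null vector.  When its
   curvature a_v + a_w vanishes, w agrees with -v on the first three coordinates. *)
Lemma tangent_sum_degenerate v w : form v v = 1 -> form w w = 1 -> form v w = -1 ->
  va v + va w = 0 -> vx w = - vx v /\ vy w = - vy v /\ va w = - va v.
Proof.
  intros Nv Nw Hvw Hm.
  assert (Null : (vx v + vx w) ^ 2 + (vy v + vy w) ^ 2 - (va v + va w) * (vb v + vb w) = 0).
  { replace 0 with (form v v + 2 * form v w + form w w) by lra. unfold form; field. }
  rewrite Hm in Null.
  pose proof (pow2_ge_0 (vx v + vx w)); pose proof (pow2_ge_0 (vy v + vy w)).
  repeat split; nra.
Qed.

(* Otherwise v + w is the null vector of weight a_v + a_w attached to the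
   tangency point of v and w. *)
Lemma tangent_sum_point v w : form v v = 1 -> form w w = 1 -> form v w = -1 ->
  va v + va w <> 0 ->
  let m := va v + va w in
  w = vdiff (vpoint m ((vx v + vx w) / m, (vy v + vy w) / m)) v.
Proof.
  intros Nv Nw Hvw Hm m.
  assert (Null : (vx v + vx w) ^ 2 + (vy v + vy w) ^ 2 - m * (vb v + vb w) = 0).
  { replace 0 with (form v v + 2 * form v w + form w w) by lra. unfold form, m; field. }
  destruct w as [xw yw aw bw]; unfold vdiff, vpoint, m in *; simpl in *; f_equal; try (field; auto).
  apply (Rmult_eq_reg_l (va v + aw)); auto. field_simplify; [nra|auto].
Qed.

(* At the tangency point p of v and w, with unit gradients g of u and e of v, the
   three spinors are a_u e - a_v g, a_u e + a_w g and -(a_v + a_w) e, and the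
   relation reduces to Q(u,u) = 1, Q(u,v) = -1, |e| = 1. *)
Lemma triple_spinor_relation u v w :
  form u u = 1 -> form v v = 1 -> form w w = 1 ->
  form u v = -1 -> form u w = -1 -> form v w = -1 ->
  quad4 (spinsq v u) (spinsq u w) (spinsq w v) 0 = 0%C.
Proof.
  intros Nu Nv Nw Huv Huw Hvw.
  destruct (Req_dec (va v + va w) 0) as [Hm|Hm].
  - destruct (tangent_sum_degenerate v w Nv Nw Hvw Hm) as (Ex & Ey & Ea).
    apply C_ext; unfold quad4, spinsq, Cminus, Cplus, Cmult, Copp, RtoC; simpl;
      rewrite Ex, Ey, Ea; ring.
  - pose proof (tangent_sum_point v w Nv Nw Hvw Hm) as Ew; simpl in Ew.
    set (m := va v + va w) in *; set (p := ((vx v + vx w) / m, (vy v + vy w) / m)) in *.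
    assert (Fw : forall x, form x w = - (m / 2) * level x p - form x v)
      by (intro x; rewrite Ew, form_vdiff, form_vpoint; reflexivity).
    assert (Lv : level v p = 0).
    { rewrite Fw, Nv in Hvw. destruct (Rmult_integral m (level v p)); [nra|lra|auto]. }
    assert (Lu : m * level u p = 4) by (rewrite Fw, Huv in Huw; lra).
    pose proof (grad_dot u u p) as Guu; pose proof (grad_dot v v p) as Gvv;
    pose proof (grad_dot u v p) as Guv.
    rewrite Lv, Nu, Nv, Huv in *.
    set (gx := gradx u p) in *; set (gy := grady u p) in *;
    set (ex := gradx v p) in *; set (ey := grady v p) in *.
    assert (H1 : m + 4 * va u - m * (gx * gx + gy * gy) = 0).
    { rewrite Guu; transitivity (4 * va u - va u * (m * level u p)); [field|rewrite Lu; ring]. }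
    assert (H2 : (2 * m - 4 * va v) + 2 * m * (gx * ex + gy * ey) = 0).
    { rewrite Guv; transitivity (va v * (m * level u p) - 4 * va v); [field|rewrite Lu; ring]. }
    assert (H3 : 1 - (ex * ex + ey * ey) = 0) by (rewrite Gvv; lra).
    rewrite Ew; apply C_ext; unfold quad4, spinsq, Cminus, Cplus, Cmult, Copp, RtoC; simpl.
    + transitivity (m * ((m + 4 * va u - m * (gx * gx + gy * gy)) * (ex * ex - ey * ey)
                    + ((2 * m - 4 * va v) + 2 * m * (gx * ex + gy * ey)) * (gx * ex - gy * ey)
                    + m * (1 - (ex * ex + ey * ey)) * (gx * gx - gy * gy))).
      * unfold gx, gy, ex, ey, gradx, grady, p; simpl; field; auto.
      * rewrite H1, H2, H3; ring.
    + transitivity (2 * m * ((m + 4 * va u - m * (gx * gx + gy * gy)) * (ex * ey)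
                    + ((2 * m - 4 * va v) + 2 * m * (gx * ex + gy * ey)) * (gx * ey + gy * ex) / 2
                    + m * (1 - (ex * ex + ey * ey)) * (gx * gy))).
      * unfold gx, gy, ex, ey, gradx, grady, p; simpl; field; auto.
      * rewrite H1, H2, H3; field.
Qed.

Definition gaussian (z : C) : Prop := exists a b : Z, z = (IZR a, IZR b).

Definition gauss_sq (z : C) : Prop := exists g, gaussian g /\ z = (g * g)%C.

Lemma gaussian_spinor_sq d e : gaussian_spinor d e <-> gauss_sq (spinsq (sym d) (sym e)).
Proof.
  split.
  - intros (a & b & Hre & Him); exists (IZR a, IZR b); split; [exists a, b; reflexivity|].
    unfold spin_sq_re, spin_sq_im in Hre, Him.
    apply C_ext; unfold Cmult, spinsq; simpl; [rewrite <- Hre | rewrite <- Him]; ring.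
  - intros (g & (a & b & ->) & E); exists a, b.
    apply (f_equal fst) in E as Ere; apply (f_equal snd) in E as Eim.
    unfold Cmult in Ere, Eim; simpl in Ere, Eim.
    unfold spin_sq_re, spin_sq_im; split; [rewrite Ere | rewrite Eim]; ring.
Qed.

Lemma gaussian_add u v : gaussian u -> gaussian v -> gaussian (u + v)%C.
Proof.
  intros (a & b & ->) (c & d & ->); exists (a + c)%Z, (b + d)%Z.
  rewrite !plus_IZR; reflexivity.
Qed.

Lemma gaussian_sub u v : gaussian u -> gaussian v -> gaussian (u - v)%C.
Proof.
  intros (a & b & ->) (c & d & ->); exists (a - c)%Z, (b - d)%Z.
  apply C_ext; rewrite !minus_IZR; unfold Cminus, Cplus, Copp; simpl; ring.
Qed.

(* -(g^2) = (i g)^2. *)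
Lemma gauss_sq_opp z : gauss_sq z -> gauss_sq (- z)%C.
Proof.
  intros (g & (a & b & ->) & ->); exists (IZR (- b), IZR a); split; [exists (- b)%Z, a; reflexivity|].
  apply C_ext; rewrite opp_IZR; unfold Cmult, Copp; simpl; ring.
Qed.

Lemma Cmult_eq_0 z w : (z * w)%C = 0%C -> z = 0%C \/ w = 0%C.
Proof.
  intro H; destruct (classic (z = 0%C)) as [Hz|Hz]; [left; exact Hz|right].
  apply NNPP; intro Hw; exact (Cmult_neq_0 z w Hz Hw H).
Qed.

(* If X and Y are Gaussian squares, the roots W = (sqrt X +- sqrt Y)^2 of the
   complex Descartes relation are Gaussian squares. *)
Lemma gauss_sq_root X Y W : gauss_sq X -> gauss_sq Y -> quad4 X Y W 0 = 0%C -> gauss_sq W.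
Proof.
  intros (u & Gu & ->) (v & Gv & ->) H.
  assert (F : ((W - (u + v) * (u + v)) * (W - (u - v) * (u - v)))%C = quad4 (u * u) (v * v) W 0)
    by (unfold quad4; ring).
  rewrite H in F.
  destruct (Cmult_eq_0 _ _ F) as [E|E].
  - exists (u + v)%C; split; [apply gaussian_add; assumption|].
    transitivity ((W - (u + v) * (u + v)) + (u + v) * (u + v))%C; [ring | rewrite E; ring].
  - exists (u - v)%C; split; [apply gaussian_sub; assumption|].
    transitivity ((W - (u - v) * (u - v)) + (u - v) * (u - v))%C; [ring | rewrite E; ring].
Qed.

(* In a frame whose first three pairs have Gaussian spinors, so do the pairs
   with the fourth vector (relations issued from v1, v2 and v3). *)
Lemma conjugate_spinors v1 v2 v3 v4 : frame v1 v2 v3 v4 ->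
  gauss_sq (spinsq v1 v2) -> gauss_sq (spinsq v1 v3) -> gauss_sq (spinsq v2 v3) ->
  gauss_sq (spinsq v1 v4) /\ gauss_sq (spinsq v2 v4) /\ gauss_sq (spinsq v3 v4).
Proof.
  intros F G12 G13 G23.
  pose proof (frame_spinor_relation _ _ _ _ v1 F) as R1;
  pose proof (frame_spinor_relation _ _ _ _ v2 F) as R2;
  pose proof (frame_spinor_relation _ _ _ _ v3 F) as R3.
  rewrite spinsq_self in R1, R2, R3.
  rewrite (spinsq_swap v1 v2) in R2; rewrite (spinsq_swap v1 v3), (spinsq_swap v2 v3) in R3.
  rewrite (proj1 (quad4_move_zero _ _ _)) in R1;
  rewrite (proj1 (proj2 (quad4_move_zero _ _ _))) in R2;
  rewrite (proj2 (proj2 (quad4_move_zero _ _ _))) in R3.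
  repeat split.
  - exact (gauss_sq_root _ _ _ G12 G13 R1).
  - exact (gauss_sq_root _ _ _ (gauss_sq_opp _ G12) G23 R2).
  - exact (gauss_sq_root _ _ _ (gauss_sq_opp _ G13) (gauss_sq_opp _ G23) R3).
Qed.

Definition integral_vec (v : vec) : Prop :=
  is_int (vx v) /\ is_int (vy v) /\ is_int (va v) /\ is_int (vb v).

Lemma is_int_add a b : is_int a -> is_int b -> is_int (a + b).
Proof. intros [z ->] [w ->]; exists (z + w)%Z; symmetry; apply plus_IZR. Qed.

Lemma is_int_opp a : is_int a -> is_int (- a).
Proof. intros [z ->]; exists (- z)%Z; symmetry; apply opp_IZR. Qed.

Lemma is_int_mul a b : is_int a -> is_int b -> is_int (a * b).
Proof. intros [z ->] [w ->]; exists (z * w)%Z; symmetry; apply mult_IZR. Qed.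

Lemma is_int_IZR z : is_int (IZR z).
Proof. exists z; reflexivity. Qed.

(* Images of symbols under inversion in a unit vector [a]: [a] itself goes to -a,
   a vector tangent to [a] goes to u + 2a. *)
Definition vneg (a : vec) : vec := Vec (- vx a) (- vy a) (- va a) (- vb a).

Definition vshift (u a : vec) : vec :=
  Vec (vx u + 2 * vx a) (vy u + 2 * vy a) (va u + 2 * va a) (vb u + 2 * vb a).

Lemma integral_vneg a : integral_vec a -> integral_vec (vneg a).
Proof. intros (Hx & Hy & Ha & Hb); repeat split; apply is_int_opp; assumption. Qed.

Lemma integral_vshift u a : integral_vec u -> integral_vec a -> integral_vec (vshift u a).
Proof.
  intros (Ux & Uy & Ua & Ub) (Ax & Ay & Aa & Ab);
    repeat split; apply is_int_add; try apply is_int_mul; try apply is_int_IZR; assumption.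
Qed.

Lemma integral_conjugate v1 v2 v3 v4 :
  integral_vec v1 -> integral_vec v2 -> integral_vec v3 -> integral_vec v4 ->
  integral_vec (comb4 2 2 2 (-1) v1 v2 v3 v4).
Proof.
  intros (X1 & Y1 & A1 & B1) (X2 & Y2 & A2 & B2) (X3 & Y3 & A3 & B3) (X4 & Y4 & A4 & B4).
  unfold comb4; repeat split; simpl;
    repeat apply is_int_add; apply is_int_mul; try apply is_int_IZR; assumption.
Qed.

Lemma small_perturbation a h0 h1 h2 : h0 <> 0 ->
  exists d, 0 < d /\ forall t, Rabs t <= d ->
    0 < 2 + a * t /\ Rabs (h1 * t + h2 * t ^ 2) < Rabs h0.
Proof.
  intro H0.
  pose proof (Rabs_pos a); pose proof (Rabs_pos h1); pose proof (Rabs_pos h2).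
  pose proof (Rabs_pos_lt h0 H0) as P0.
  set (K := Rabs a + Rabs h1 + Rabs h2 + 1).
  set (d := Rabs h0 / (2 * K * (Rabs h0 + 1))).
  assert (HK : 1 <= K) by (unfold K; lra).
  assert (Hd : 0 < d) by (unfold d; apply Rdiv_lt_0_compat; nra).
  assert (HdK : d * K * 2 * (Rabs h0 + 1) = Rabs h0) by (unfold d; field; lra).
  assert (dK2 : d * K <= 1 / 2) by nra.
  assert (dK : d * K < Rabs h0) by nra.
  exists d; split; [exact Hd|]; intros t Ht.
  pose proof (Rabs_pos t) as Pt.
  assert (Ht1 : Rabs t <= 1) by nra.
  split.
  - assert (Rabs (a * t) <= 1 / 2) by (rewrite Rabs_mult; unfold K in dK2; nra).
    pose proof (Rle_abs (- (a * t))); rewrite Rabs_Ropp in *; lra.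
  - eapply Rle_lt_trans; [apply Rabs_triang|].
    rewrite !Rabs_mult, <- RPow_abs.
    assert (Rabs t ^ 2 <= Rabs t) by nra.
    assert ((Rabs h1 + Rabs h2) * Rabs t <= K * d) by (unfold K; nra).
    nra.
Qed.

(* On a line with unit direction, some parameter of prescribed sign and size at most
   [d] gives a point different from [c] (of the two candidates d and d/2, one works). *)
Lemma parameter_avoiding p gx gy c d h0 : gx * gx + gy * gy = 1 -> 0 < d -> h0 <> 0 ->
  exists t, (fst p + t * gx, snd p + t * gy) <> c /\ Rabs t <= d /\ h0 * t < 0.
Proof.
  intros G Hd H0.
  set (t0 := if Rlt_dec 0 h0 then - d else d).
  assert (T0 : h0 * t0 < 0 /\ Rabs t0 = d).
  { unfold t0; destruct (Rlt_dec 0 h0).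
    - rewrite Rabs_Ropp, Rabs_pos_eq by lra; split; nra.
    - rewrite Rabs_pos_eq by lra; split; [nra|reflexivity]. }
  destruct (classic ((fst p + t0 * gx, snd p + t0 * gy) = c)) as [Ec|Nc].
  - exists (t0 / 2); repeat split.
    + intro E; rewrite <- Ec in E; injection E; intros Ey Ex.
      assert (Z : (t0 / 2 - t0) ^ 2 * (gx * gx + gy * gy) = 0) by nra.
      rewrite G in Z; nra.
    + unfold Rdiv; rewrite Rabs_mult, (Rabs_pos_eq (/ 2)) by lra; lra.
    + nra.
  - exists t0; repeat split; [exact Nc|lra|tauto].
Qed.

(* If the sublevel sets of [s] and [e] agree off one point, the boundary of [s]
   lies in the zero set of [level e]: otherwise [level e] keeps a constant sign
   across the boundary of [s]. *)
Lemma boundary_agreement s e c : form s s = 1 ->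
  (forall p, p <> c -> (level s p <= 0 <-> level e p <= 0)) ->
  forall p, level s p = 0 -> level e p = 0.
Proof.
  intros Ns Agree p Lp.
  pose proof (grad_dot s s p) as Gss; rewrite Lp, Ns in Gss.
  set (gx := gradx s p) in *; set (gy := grady s p) in *.
  assert (G1 : gx * gx + gy * gy = 1) by lra.
  assert (G2 : gx ^ 2 + gy ^ 2 = 1) by (simpl; lra).
  set (h0 := level e p); set (h1 := 2 * (gradx e p * gx + grady e p * gy)); set (h2 := va e).
  assert (Ls : forall t, level s (fst p + t * gx, snd p + t * gy) = t * (2 + va s * t))
    by (intro t; rewrite level_shift, Lp; fold gx gy; rewrite G1, G2; ring).
  assert (Le : forall t, level e (fst p + t * gx, snd p + t * gy) = h0 + (h1 * t + h2 * t ^ 2))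
    by (intro t; rewrite level_shift; fold gx gy; rewrite G2; unfold h0, h1, h2; ring).
  apply NNPP; intro H0.
  destruct (small_perturbation (va s) h0 h1 h2 H0) as (d & Hd & Small).
  destruct (parameter_avoiding p gx gy c d h0 G1 Hd H0) as (t & Hc & Bt & St).
  destruct (Small t Bt) as [Pos Err].
  pose proof (Agree _ Hc) as A; rewrite Ls, Le in A.
  pose proof (Rle_abs (h1 * t + h2 * t ^ 2)) as E1;
  pose proof (Rle_abs (- (h1 * t + h2 * t ^ 2))) as E2; rewrite Rabs_Ropp in E2.
  (* the point of parameter [t] lies in the disk of [s] exactly when h0 > 0, while the
     sign of [level e] there is that of h0 *)
  destruct (Rlt_dec 0 h0) as [Hp|Hn].
  - rewrite (Rabs_pos_eq h0) in Err by lra.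
    assert (Tn : t < 0) by (destruct (Rlt_le_dec t 0); [auto|pose proof (Rmult_le_pos h0 t); lra]).
    assert (In : t * (2 + va s * t) <= 0) by nra. apply A in In; lra.
  - rewrite (Rabs_left h0) in Err by lra.
    assert (Tp : 0 < t) by (destruct (Rlt_le_dec 0 t); [auto|pose proof (Rmult_le_pos (- h0) (- t)); lra]).
    assert (Out : 0 < t * (2 + va s * t)) by nra.
    assert (Ins : h0 + (h1 * t + h2 * t ^ 2) <= 0) by lra. apply A in Ins; lra.
Qed.

Definition vscale (l : R) (u : vec) : vec := Vec (l * vx u) (l * vy u) (l * va u) (l * vb u).

(* A quadratic vanishing on a line (unit symbol with a = 0) is a multiple of its
   equation: test it at three points of the line. *)
Lemma zero_set_proportional_line s e : form s s = 1 -> va s = 0 ->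
  (forall p, level s p = 0 -> level e p = 0) -> exists l, e = vscale l s.
Proof.
  destruct s as [sx sy sa sb], e as [ex ey ea eb]; unfold form, level, vscale; simpl.
  intros N Ha Z.
  subst sa; assert (U : sx ^ 2 + sy ^ 2 = 1) by lra.
  assert (Zt : forall t, let p := (sb * sx / 2 - t * sy, sb * sy / 2 + t * sx) in
             ea * (fst p ^ 2 + snd p ^ 2) - 2 * (ex * fst p + ey * snd p) + eb = 0).
  { intro t; apply Z; simpl.
    transitivity (sb * (1 - (sx ^ 2 + sy ^ 2))); [field | rewrite U; ring]. }
  pose proof (Zt 0) as Z0; pose proof (Zt 1) as Z1; pose proof (Zt (-1)) as Zm; simpl in Z0, Z1, Zm.
  assert (Hea : ea = 0) by nra.
  assert (Hp : - ex * sy + ey * sx = 0) by nra.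
  exists (ex * sx + ey * sy); subst ea; f_equal.
  - transitivity (ex * (sx ^ 2 + sy ^ 2)); [rewrite U; ring|].
    transitivity ((ex * sx + ey * sy) * sx - (- ex * sy + ey * sx) * sy); [ring|rewrite Hp; ring].
  - transitivity (ey * (sx ^ 2 + sy ^ 2)); [rewrite U; ring|].
    transitivity ((ex * sx + ey * sy) * sy + (- ex * sy + ey * sx) * sx); [ring|rewrite Hp; ring].
  - ring.
  - nra.
Qed.

(* A quadratic vanishing on a circle (unit symbol with a <> 0, center (x/a, y/a),
   radius 1/|a|) is a multiple of its equation: test it at three points of the circle. *)
Lemma zero_set_proportional_circle s e : form s s = 1 -> va s <> 0 ->
  (forall p, level s p = 0 -> level e p = 0) -> exists l, e = vscale l s.
Proof.
  destruct s as [sx sy sa sb], e as [ex ey ea eb]; unfold form, level, vscale; simpl.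
  intros N Ha Z.
  set (mx := sx / sa); set (my := sy / sa).
  assert (Zu : forall ux uy, ux ^ 2 + uy ^ 2 = 1 ->
            let p := (mx + ux / sa, my + uy / sa) in
            ea * (fst p ^ 2 + snd p ^ 2) - 2 * (ex * fst p + ey * snd p) + eb = 0).
  { intros ux uy Hu; apply Z; simpl; unfold mx, my.
    transitivity ((ux ^ 2 + uy ^ 2 - (sx * sx + sy * sy - (sa * sb + sb * sa) / 2)) / sa);
      [field; auto | rewrite Hu, N; field; auto]. }
  pose proof (Zu 1 0 ltac:(ring)) as P1; pose proof (Zu (-1) 0 ltac:(ring)) as P2;
  pose proof (Zu 0 1 ltac:(ring)) as P3; cbn [fst snd] in P1, P2, P3.
  set (F1 := ea * ((mx + 1 / sa) ^ 2 + (my + 0 / sa) ^ 2)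
              - 2 * (ex * (mx + 1 / sa) + ey * (my + 0 / sa)) + eb) in P1.
  set (F2 := ea * ((mx + -1 / sa) ^ 2 + (my + 0 / sa) ^ 2)
              - 2 * (ex * (mx + -1 / sa) + ey * (my + 0 / sa)) + eb) in P2.
  set (F3 := ea * ((mx + 0 / sa) ^ 2 + (my + 1 / sa) ^ 2)
              - 2 * (ex * (mx + 0 / sa) + ey * (my + 1 / sa)) + eb) in P3.
  assert (Ex : ea * sx - ex * sa = 0).
  { replace (ea * sx - ex * sa) with ((sa ^ 2 / 4) * (F1 - F2))
      by (unfold F1, F2, mx, my; field; auto).
    rewrite P1, P2; ring. }
  assert (Ey : ea * sy - ey * sa = 0).
  { replace (ea * sy - ey * sa) with ((sa ^ 2 / 2) * (F3 - (F1 + F2) / 2))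
      by (unfold F1, F2, F3, mx, my; field; auto).
    rewrite P1, P2, P3; field. }
  assert (Hex : ex = ea / sa * sx).
  { apply (Rmult_eq_reg_l sa); [|auto].
    replace (sa * (ea / sa * sx)) with (ea * sx) by (field; auto); lra. }
  assert (Hey : ey = ea / sa * sy).
  { apply (Rmult_eq_reg_l sa); [|auto].
    replace (sa * (ea / sa * sy)) with (ea * sy) by (field; auto); lra. }
  assert (Eb : (F1 + F2) / 2 = eb - ea / sa * sb
               - (ea / sa ^ 2) * ((sx * sx + sy * sy - (sa * sb + sb * sa) / 2) - 1))
    by (unfold F1, F2, mx, my; rewrite Hex, Hey; field; auto).
  rewrite N, P1, P2 in Eb.
  exists (ea / sa); f_equal; [exact Hex | exact Hey | field; auto | lra].
Qed.

Lemma zero_set_proportional s e : form s s = 1 ->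
  (forall p, level s p = 0 -> level e p = 0) -> exists l, e = vscale l s.
Proof.
  intros N Z; destruct (Req_dec (va s) 0).
  - apply zero_set_proportional_line; assumption.
  - apply zero_set_proportional_circle; assumption.
Qed.

(* A unit symbol does not vanish identically off a point: its level function is
   nonzero at two distinct points. *)
Lemma exists_nonzero_level s c : form s s = 1 -> exists q, q <> c /\ level s q <> 0.
Proof.
  intro N.
  assert (Two : exists q1 q2, q1 <> q2 /\ level s q1 <> 0 /\ level s q2 <> 0).
  { destruct s as [sx sy sa sb]; unfold form, level in *; simpl in *.
    destruct (Req_dec sa 0) as [Ha|Ha].
    - subst sa. assert (U : sx * sx + sy * sy = 1) by lra.
      exists ((sb / 2 + 1) * sx, (sb / 2 + 1) * sy), ((sb / 2 - 1) * sx, (sb / 2 - 1) * sy).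
      simpl; repeat split.
      + intro E; injection E; intros Ey Ex.
        assert (sx = 0) by lra; assert (sy = 0) by lra; subst; lra.
      + replace (0 * _ - _ + sb) with (- 2 * (sb / 2 + 1) * (sx * sx + sy * sy) + sb) by ring.
        rewrite U; lra.
      + replace (0 * _ - _ + sb) with (- 2 * (sb / 2 - 1) * (sx * sx + sy * sy) + sb) by ring.
        rewrite U; lra.
    - exists (sx / sa, sy / sa), (sx / sa + 2 / sa, sy / sa); simpl; repeat split.
      + intro E; injection E; intros E1.
        assert (Z2 : 2 / sa = 0) by lra; apply Rmult_integral in Z2.
        destruct Z2 as [Z2|Z2]; [lra|exact (Rinv_neq_0_compat sa Ha Z2)].
      + replace (sa * _ - _ + sb) with (- (sx * sx + sy * sy - (sa * sb + sb * sa) / 2) / sa)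
          by (field; auto).
        rewrite N; intro E; apply Rmult_integral in E; destruct E as [E|E];
          [lra | exact (Rinv_neq_0_compat sa Ha E)].
      + replace (sa * _ - _ + sb) with ((4 - (sx * sx + sy * sy - (sa * sb + sb * sa) / 2)) / sa)
          by (field; auto).
        rewrite N; intro E; apply Rmult_integral in E; destruct E as [E|E];
          [lra | exact (Rinv_neq_0_compat sa Ha E)]. }
  destruct Two as (q1 & q2 & D & N1 & N2).
  destruct (classic (q1 = c)) as [->|H]; [exists q2 | exists q1]; split; auto.
Qed.

Lemma sublevel_determines s e c : form s s = 1 -> form e e = 1 ->
  (forall p, p <> c -> (level s p <= 0 <-> level e p <= 0)) -> e = s.
Proof.
  intros Ns Ne Agree.
  destruct (zero_set_proportional s e Ns (boundary_agreement s e c Ns Agree)) as [l ->].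
  assert (L2 : (l - 1) * (l + 1) = 0).
  { replace (form (vscale l s) (vscale l s)) with (l ^ 2 * form s s) in Ne
      by (unfold form, vscale; simpl; field).
    rewrite Ns in Ne; nra. }
  assert (Lv : forall p, level (vscale l s) p = l * level s p)
    by (intro p; unfold level, vscale; simpl; ring).
  destruct (Rmult_integral _ _ L2) as [E|E].
  - replace l with 1 by lra; destruct s; unfold vscale; simpl; f_equal; ring.
  - exfalso; assert (l = -1) by lra; subst l.
    destruct (exists_nonzero_level s c Ns) as (q & Hq & Nq).
    pose proof (Agree q Hq) as A; rewrite Lv in A.
    destruct A as [A1 A2]; destruct (Rlt_or_le (level s q) 0) as [Hn|Hp].
    + pose proof (A1 (Rlt_le _ _ Hn)); lra.
    + assert (Hlt : -1 * level s q <= 0) by lra. pose proof (A2 Hlt); lra.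
Qed.

Definition reflect (a u : vec) : vec :=
  Vec (vx u - 2 * form u a * vx a) (vy u - 2 * form u a * vy a)
      (va u - 2 * form u a * va a) (vb u - 2 * form u a * vb a).

Lemma reflect_isometry a u : form a a = 1 -> form (reflect a u) (reflect a u) = form u u.
Proof.
  intro Na; transitivity (form u u + 4 * form u a ^ 2 * (form a a - 1)).
  - unfold reflect, form; simpl; field.
  - rewrite Na; ring.
Qed.

Lemma dist2_pos p x y : p <> (x, y) -> 0 < dist2 p x y.
Proof.
  destruct p as [px py]; unfold dist2; simpl; intro H.
  apply Rnot_le_lt; intro Hle; apply H.
  pose proof (pow2_ge_0 (px - x)); pose proof (pow2_ge_0 (py - y)).
  f_equal; nra.
Qed.

Lemma level_reflect A u p : valid_disk A -> inv_dom A p ->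
  exists mu, 0 < mu /\ level (reflect (sym A) u) p = mu * level u (inv_map A p).
Proof.
  destruct A as [x y r|x y r|nx ny h]; simpl; intros V Hd.
  - pose proof (dist2_pos p x y Hd) as Hp; exists (dist2 p x y / r ^ 2); split.
    + apply Rdiv_lt_0_compat; [exact Hp | apply pow_lt; exact V].
    + destruct p as [px py]; unfold dist2 in *; simpl in *.
      unfold level, reflect, form; simpl; field; lra.
  - pose proof (dist2_pos p x y Hd) as Hp; exists (dist2 p x y / r ^ 2); split.
    + apply Rdiv_lt_0_compat; [exact Hp | apply pow_lt; exact V].
    + destruct p as [px py]; unfold dist2 in *; simpl in *.
      unfold level, reflect, form; simpl; field; lra.
  - exists 1; split; [lra|].
    destruct p as [px py]; unfold dotn; simpl.
    transitivity (1 * level u (inv_map (HalfPlane nx ny h) (px, py))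
                  - 4 * va u * (px * nx + py * ny - h) ^ 2 * (nx ^ 2 + ny ^ 2 - 1)).
    + unfold level, reflect, form; simpl; unfold dotn; simpl; field.
    + replace (nx ^ 2 + ny ^ 2 - 1) with 0 by (simpl; lra); unfold inv_map, dotn; simpl; ring.
Qed.

Lemma inversion_symbol A X X1 : valid_disk A -> valid_disk X -> valid_disk X1 ->
  inv_image A X X1 -> sym X1 = reflect (sym A) (sym X).
Proof.
  intros VA VX VX1 Inv.
  assert (Hc : exists c : point, forall p, p <> c -> inv_dom A p)
    by (destruct A as [x y r|x y r|nx ny h]; simpl; [exists (x, y)|exists (x, y)|exists (0, 0)]; auto).
  destruct Hc as [c Hc].
  apply (sublevel_determines _ _ c).
  - rewrite reflect_isometry; apply valid_unit; assumption.
  - apply valid_unit; assumption.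
  - intros p Hp; specialize (Hc p Hp).
    destruct (level_reflect A (sym X) p VA Hc) as (mu & Hmu & E); rewrite E.
    rewrite <- (proj1 (level_sign X1 p VX1)), (Inv p Hc), (proj1 (level_sign X _ VX)).
    split; intro H; nra.
Qed.

Lemma reflect_self a : form a a = 1 -> reflect a a = vneg a.
Proof. intro N; unfold reflect, vneg; rewrite N; f_equal; ring. Qed.

Lemma reflect_tangent a u : form u a = -1 -> reflect a u = vshift u a.
Proof. intro T; unfold reflect, vshift; rewrite T; f_equal; ring. Qed.

Lemma spinsq_vneg_vshift a u : spinsq (vneg a) (vshift u a) = (- spinsq a u)%C.
Proof. apply C_ext; unfold spinsq, vneg, vshift, Copp; simpl; ring. Qed.

Lemma spinsq_vshift a u v :
  spinsq (vshift u a) (vshift v a) = (RtoC 2 * spinsq u a + RtoC 2 * spinsq a v - spinsq v u)%C.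
Proof. apply C_ext; unfold spinsq, vshift, Cminus, Cplus, Cmult, Copp, RtoC; simpl; ring. Qed.

(* Pairs not involving [a] keep Gaussian spinors after inversion, by the cyclic
   relation for the triple (a, u, v). *)
Lemma shifted_spinor_gaussian a u v :
  form a a = 1 -> form u u = 1 -> form v v = 1 ->
  form a u = -1 -> form a v = -1 -> form u v = -1 ->
  gauss_sq (spinsq a u) -> gauss_sq (spinsq a v) ->
  gauss_sq (spinsq (vshift u a) (vshift v a)).
Proof.
  intros Na Nu Nv Tau Tav Tuv Gau Gav.
  rewrite spinsq_vshift.
  apply (gauss_sq_root (spinsq u a) (spinsq a v)); [rewrite spinsq_swap; apply gauss_sq_opp; exact Gau | exact Gav |].
  rewrite quad4_other_root; exact (triple_spinor_relation a u v Na Nu Nv Tau Tav Tuv).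
Qed.

Lemma conjugate_part A B C D D' :
  descartes A B C D -> all_integral A B C D -> all_gaussian A B C D ->
  descartes_conjugate A B C D D' ->
  descartes A B C D' /\
  xdot D + xdot D' = 2 * (xdot A + xdot B + xdot C) /\
  ydot D + ydot D' = 2 * (ydot A + ydot B + ydot C) /\
  curv D + curv D' = 2 * (curv A + curv B + curv C) /\
  cocurv D + cocurv D' = 2 * (cocurv A + cocurv B + cocurv C) /\
  all_integral A B C D' /\ all_gaussian A B C D'.
Proof.
  intros Desc Int Gauss Conj.
  pose proof (conjugate_symbol _ _ _ _ _ Desc Conj) as SD'.
  assert (Desc' : descartes A B C D').
  { destruct Desc as (VA & VB & VC & _ & TAB & TAC & _ & TBC & _), Conj as (VD' & TAD' & TBD' & TCD' & _).
    unfold descartes; tauto. }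
  destruct Int as (IA & IB & IC & ID), Gauss as (GAB & GAC & _ & GBC & _).
  rewrite gaussian_spinor_sq in GAB, GAC, GBC.
  destruct (conjugate_spinors _ _ _ _ (descartes_frame _ _ _ _ Desc') GAB GAC GBC) as (GAD' & GBD' & GCD').
  pose proof SD' as Comp; injection Comp as Ex Ey Ea Eb.
  split; [exact Desc'|]; split; [rewrite Ex; ring|]; split; [rewrite Ey; ring|];
    split; [rewrite Ea; ring|]; split; [rewrite Eb; ring|]; split.
  - refine (conj IA (conj IB (conj IC _))).
    change (integral_vec (sym D')); rewrite SD'.
    apply integral_conjugate; assumption.
  - unfold all_gaussian; rewrite !gaussian_spinor_sq; repeat split; assumption.
Qed.

Lemma symbol_eq d v : sym d = v -> symbol d = (vx v, vy v, va v, vb v).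
Proof. intros <-; reflexivity. Qed.

Lemma integral_symbol_eq d v : sym d = v -> integral_vec v -> integral_symbol d.
Proof. intros <- H; exact H. Qed.

Lemma inversion_part A B C D A1 B1 C1 D1 :
  descartes A B C D -> all_integral A B C D -> all_gaussian A B C D ->
  valid_disk A1 -> valid_disk B1 -> valid_disk C1 -> valid_disk D1 ->
  inv_image A A A1 -> inv_image A B B1 -> inv_image A C C1 -> inv_image A D D1 ->
  symbol A1 = (- xdot A, - ydot A, - curv A, - cocurv A) /\
  symbol B1 = (xdot B + 2 * xdot A, ydot B + 2 * ydot A,
               curv B + 2 * curv A, cocurv B + 2 * cocurv A) /\
  symbol C1 = (xdot C + 2 * xdot A, ydot C + 2 * ydot A,
               curv C + 2 * curv A, cocurv C + 2 * cocurv A) /\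
  symbol D1 = (xdot D + 2 * xdot A, ydot D + 2 * ydot A,
               curv D + 2 * curv A, cocurv D + 2 * cocurv A) /\
  all_integral A1 B1 C1 D1 /\ all_gaussian A1 B1 C1 D1.
Proof.
  intros Desc Int Gauss VA1 VB1 VC1 VD1 IA IB IC ID.
  pose proof (descartes_frame _ _ _ _ Desc) as (NA & NB & NC & ND & TAB & TAC & TAD & TBC & TBD & TCD).
  destruct Desc as (VA & VB & VC & VD & _).
  assert (SA : sym A1 = vneg (sym A))
    by (rewrite (inversion_symbol A A A1), reflect_self; auto).
  assert (SB : sym B1 = vshift (sym B) (sym A))
    by (rewrite (inversion_symbol A B B1), reflect_tangent; try rewrite form_sym; auto).
  assert (SC : sym C1 = vshift (sym C) (sym A))
    by (rewrite (inversion_symbol A C C1), reflect_tangent; try rewrite form_sym; auto).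
  assert (SD : sym D1 = vshift (sym D) (sym A))
    by (rewrite (inversion_symbol A D D1), reflect_tangent; try rewrite form_sym; auto).
  destruct Int as (IntA & IntB & IntC & IntD).
  unfold all_gaussian in *; rewrite !gaussian_spinor_sq in *.
  destruct Gauss as (GAB & GAC & GAD & _).
  rewrite (symbol_eq _ _ SA), (symbol_eq _ _ SB), (symbol_eq _ _ SC), (symbol_eq _ _ SD).
  refine (conj eq_refl (conj eq_refl (conj eq_refl (conj eq_refl (conj _ _))))).
  - refine (conj _ (conj _ (conj _ _)));
      [apply (integral_symbol_eq _ _ SA), integral_vneg
      |apply (integral_symbol_eq _ _ SB), integral_vshift
      |apply (integral_symbol_eq _ _ SC), integral_vshift
      |apply (integral_symbol_eq _ _ SD), integral_vshift]; assumption.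
  - rewrite SA, SB, SC, SD, !spinsq_vneg_vshift.
    repeat split; try (apply gauss_sq_opp; assumption);
      apply shifted_spinor_gaussian; assumption.
Qed.

Theorem mainTheorem6 (A B C D : disk) :
  descartes A B C D ->
  all_integral A B C D ->
  all_gaussian A B C D ->
  (* (a) Descartes conjugate of D *)
  (forall D' : disk,
     descartes_conjugate A B C D D' ->
     descartes A B C D' /\
     xdot D + xdot D' = 2 * (xdot A + xdot B + xdot C) /\
     ydot D + ydot D' = 2 * (ydot A + ydot B + ydot C) /\
     curv D + curv D' = 2 * (curv A + curv B + curv C) /\
     cocurv D + cocurv D' = 2 * (cocurv A + cocurv B + cocurv C) /\
     all_integral A B C D' /\ all_gaussian A B C D') /\
  (* (b) image under inversion in the boundary circle of A *)
  (forall A1 B1 C1 D1 : disk,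
     valid_disk A1 -> valid_disk B1 -> valid_disk C1 -> valid_disk D1 ->
     inv_image A A A1 -> inv_image A B B1 ->
     inv_image A C C1 -> inv_image A D D1 ->
     symbol A1 = (- xdot A, - ydot A, - curv A, - cocurv A) /\
     symbol B1 = (xdot B + 2 * xdot A, ydot B + 2 * ydot A,
                  curv B + 2 * curv A, cocurv B + 2 * cocurv A) /\
     symbol C1 = (xdot C + 2 * xdot A, ydot C + 2 * ydot A,
                  curv C + 2 * curv A, cocurv C + 2 * cocurv A) /\
     symbol D1 = (xdot D + 2 * xdot A, ydot D + 2 * ydot A,
                  curv D + 2 * curv A, cocurv D + 2 * cocurv A) /\
     all_integral A1 B1 C1 D1 /\ all_gaussian A1 B1 C1 D1).
Proof.
  intros Desc Int Gauss; split.
  - intros D' Conj; exact (conjugate_part A B C D D' Desc Int Gauss Conj).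
  - intros A1 B1 C1 D1 VA1 VB1 VC1 VD1 IA IB IC ID.
    exact (inversion_part A B C D A1 B1 C1 D1 Desc Int Gauss VA1 VB1 VC1 VD1 IA IB IC ID).
Qed.
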